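(* Let $\mathbb{X},\mathbb{Y}$ be finite-dimensional real polyhedral Banach spaces with $\dim\mathbb{X}=n$, $\dim\mathbb{Y}=m$. Let $T\in\mathbb{L}(\mathbb{X},\mathbb{Y})$ with $\|T\|=1$ be such that $M_T=F\cup(-F)$ for some face $F$ of $B_{\mathbb{X}}$ and $T(M_T)$ has exactly two elements. If $T$ is $k$-smooth, then $k\in\{pq:1\le p\le n,\ 1\le q\le m\}$.
   Context: Polyhedral: the closed unit ball has finitely many extreme points. $M_T=\{x:\|x\|=1,\|Tx\|=\|T\|\}$. For a unit vector $z$ of a normed space $\mathbb{Z}$, $J(z)=\{f\in\mathbb{Z}^*:\|f\|=1,f(z)=1\}$ and $z$ is $k$-smooth if $\dim\operatorname{span}J(z)=k$ ($T$ is viewed in $\mathbb{L}(\mathbb{X},\mathbb{Y})$ with operator norm). A convex set $F\subset S_{\mathbb{X}}$ is a face of $B_{\mathbb{X}}$ if whenever $x_1,x_2\in S_{\mathbb{X}}$ and $(1-t)x_1+tx_2\in F$ for some $0<t<1$, then $x_1,x_2\in F$. *)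

From HB Require Import structures.
From mathcomp Require Import all_boot all_order all_algebra.
From mathcomp Require Import boolp classical_sets cardinality reals.
Set Implicit Arguments. Unset Strict Implicit. Unset Printing Implicit Defensive.
Import Order.TTheory GRing.Theory Num.Theory.
Local Open Scope ring_scope.
Local Open Scope classical_set_scope.

(* A finite-dimensional real normed space of dimension n is modelled as
   'rV[R]_n equipped with an arbitrary norm N. Operators X -> Y are
   matrices A : 'M_(n,m) acting by x |-> x *m A. *)

Section Defs.
Variable R : realType.

Definition is_norm (n : nat) (N : 'rV[R]_n -> R) : Prop :=
  [/\ forall x, 0 <= N x,
      forall x, N x = 0 -> x = 0,
      forall (a : R) x, N (a *: x) = `|a| * N x
    & forall x y, N (x + y) <= N x + N y].

Definition unit_ball (n : nat) (N : 'rV[R]_n -> R) : set 'rV[R]_n :=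
  [set x | N x <= 1].

Definition unit_sphere (n : nat) (N : 'rV[R]_n -> R) : set 'rV[R]_n :=
  [set x | N x = 1].

Definition extreme_point (n : nat) (N : 'rV[R]_n -> R) (x : 'rV[R]_n) : Prop :=
  unit_ball N x /\
  forall y z (t : R), unit_ball N y -> unit_ball N z -> 0 < t -> t < 1 ->
    x = (1 - t) *: y + t *: z -> y = z.

Definition polyhedral (n : nat) (N : 'rV[R]_n -> R) : Prop :=
  finite_set [set x | extreme_point N x].

Definition op_norm (n m : nat) (NX : 'rV[R]_n -> R) (NY : 'rV[R]_m -> R)
  (A : 'M[R]_(n, m)) : R :=
  sup [set NY (x *m A) | x in unit_sphere NX].

Definition norm_attain (n m : nat) (NX : 'rV[R]_n -> R) (NY : 'rV[R]_m -> R)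
  (T : 'M[R]_(n, m)) : set 'rV[R]_n :=
  [set x | NX x = 1 /\ NY (x *m T) = op_norm NX NY T].

Definition convex_set (n : nat) (F : set 'rV[R]_n) : Prop :=
  forall x y (t : R), F x -> F y -> 0 <= t -> t <= 1 -> F ((1 - t) *: x + t *: y).

Definition face (n : nat) (N : 'rV[R]_n -> R) (F : set 'rV[R]_n) : Prop :=
  [/\ convex_set F, F `<=` unit_sphere N &
      forall x1 x2 (t : R), unit_sphere N x1 -> unit_sphere N x2 -> 0 < t -> t < 1 ->
        F ((1 - t) *: x1 + t *: x2) -> F x1 /\ F x2].

(* Linear functionals on L(X,Y) = 'M_(n,m) are represented by matrices B
   via the pairing <B, A> = sum_ij B_ij A_ij (every linear functional on
   'M_(n,m) is uniquely of this form). *)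
Definition pairing (n m : nat) (B A : 'M[R]_(n, m)) : R :=
  \sum_(i < n) \sum_(j < m) B i j * A i j.

Definition dual_op_norm (n m : nat) (NX : 'rV[R]_n -> R) (NY : 'rV[R]_m -> R)
  (B : 'M[R]_(n, m)) : R :=
  sup [set `|pairing B A| | A in [set A | op_norm NX NY A <= 1]].

Definition support_functionals (n m : nat) (NX : 'rV[R]_n -> R) (NY : 'rV[R]_m -> R)
  (T : 'M[R]_(n, m)) : set 'M[R]_(n, m) :=
  [set B | dual_op_norm NX NY B = 1 /\ pairing B T = 1].

Definition dim_span (n m : nat) (S : set 'M[R]_(n, m)) (k : nat) : Prop :=
  exists s : seq 'M[R]_(n, m),
    [/\ forall B, B \in s -> S B,
        forall B, S B -> B \in <<s>>%VS
      & \dim <<s>>%VS = k].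

Definition k_smooth (n m : nat) (NX : 'rV[R]_n -> R) (NY : 'rV[R]_m -> R)
  (T : 'M[R]_(n, m)) (k : nat) : Prop :=
  dim_span (support_functionals NX NY T) k.

End Defs.

From HB Require Import structures.
From mathcomp Require Import all_boot all_order all_algebra.
From mathcomp Require Import boolp classical_sets cardinality reals.
From mathcomp Require Import topology normedtype.
From mathcomp Require Import ring lra.
Import Order.TTheory GRing.Theory Num.Theory numFieldNormedType.Exports.
Set Implicit Arguments. Unset Strict Implicit. Unset Printing Implicit Defensive.
Local Open Scope ring_scope.
Local Open Scope classical_set_scope.

(* Since [F] is convex and [T] maps it into a two-point set, [T] is constant
   on [F], say equal to [y0]. For [x] in [F] and [g] a norming functional of
   [Y] at [y0], the rank-one functional [x ⊗ g] supports [T]. Conversely, if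
   [A] is annihilated by all these [x ⊗ g], then, since [M_T = F ∪ -F], the
   directional derivative of the norm of [Y] at [y0] together with compactness
   of the unit sphere of [X] give [||T + tA|| <= 1 + o(t)] as [t -> 0+], so
   every support functional [B] of [T] has [B(A) <= 0]. Hence [J(T)] spans
   exactly [span F ⊗ span G], where [G] is the set of norming functionals at
   [y0]; its dimension is [pq] with [1 <= p <= n] and [1 <= q <= m]. *)

Section IsNorm.
Variables (R : realType) (m : nat) (N : 'rV[R]_m -> R).
Hypothesis hN : is_norm N.

Lemma isnorm_ge0 x : 0 <= N x. Proof. by case: hN. Qed.
Lemma isnorm_eq0 x : N x = 0 -> x = 0. Proof. by case: hN => _ h _ _; exact: h. Qed.
Lemma isnormZ a x : N (a *: x) = `|a| * N x. Proof. by case: hN. Qed.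
Lemma isnormD x y : N (x + y) <= N x + N y. Proof. by case: hN. Qed.

Lemma isnorm0 : N 0 = 0.
Proof. by rewrite -(scale0r 0) isnormZ normr0 mul0r. Qed.

Lemma isnormN x : N (- x) = N x.
Proof. by rewrite -scaleN1r isnormZ normrN normr1 mul1r. Qed.

Lemma isnorm_sum (I : finType) (f : I -> 'rV[R]_m) :
  N (\sum_i f i) <= \sum_i N (f i).
Proof.
elim/big_ind2: _ => [|a b c d h1 h2|//]; first by rewrite isnorm0.
exact: le_trans (isnormD _ _) (lerD h1 h2).
Qed.

Lemma isnorm_mulmx_le n (M : 'M[R]_(n, m)) x :
  N (x *m M) <= `|x| * \sum_i N (row i M).
Proof.
rewrite mulmx_sum_row (le_trans (isnorm_sum _)) // mulr_sumr ler_sum // => i _.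
rewrite isnormZ ler_wpM2r ?isnorm_ge0 //.
by rewrite [`|x|]mx_normrE; apply/bigmax_geP; right; exists (0, i).
Qed.

Lemma isnorm_dist_le x y : `|N x - N y| <= N (x - y).
Proof.
have := isnormD (x - y) y; have := isnormD (y - x) x.
rewrite !subrK -opprB isnormN ler_norml => h1 h2; apply/andP; split; lra.
Qed.

Lemma continuous_isnorm_mulmx n (M : 'M[R]_(n, m)) :
  continuous (fun x : 'rV[R]_n => N (x *m M)).
Proof.
move=> x; apply/(@cvgrPdist_lt _ _ _ _ (nbhs_filter x)) => e e0.
set L := \sum_i N (row i M).
have L0 : 0 <= L by rewrite sumr_ge0 // => i _; exact: isnorm_ge0.
apply/nbhs_ballP; exists (e / (L + 1)) => [|z]; first by rewrite /= divr_gt0 // ltr_wpDl.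
rewrite mx_norm_ball /ball_ /= => hz.
apply: le_lt_trans (isnorm_dist_le _ _) _; rewrite -mulmxBl.
apply: le_lt_trans (isnorm_mulmx_le _ _) _.
apply: (@le_lt_trans _ _ (e / (L + 1) * L)); first by rewrite ler_wpM2r // ltW.
rewrite mulrAC ltr_pdivrMr ?ltr_wpDl //; nra.
Qed.

Lemma continuous_isnorm : continuous N.
Proof.
have := @continuous_isnorm_mulmx m 1%:M.
by have -> : (fun x => N (x *m 1%:M)) = N by apply/funext => x; rewrite mulmx1.
Qed.

End IsNorm.

Section Compactness.
Variable R : realType.

Lemma seq_pos_lbound (s : seq R) :
  exists2 d, 0 < d & forall r, r \in s -> 0 < r -> d <= r.
Proof.
elim: s => [|a s [d d0 hd]]; first by exists 1.
have [a0|a0] := ltrP 0 a.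
  exists (Num.min d a) => [|r]; first by rewrite lt_min d0 a0.
  by rewrite in_cons => /orP[/eqP ->|/hd h /h]; rewrite ge_min ?lexx ?orbT // => ->.
exists d => // r; rewrite in_cons => /orP[/eqP ->|]; last exact: hd.
by move=> a_pos; move: (lt_le_trans a_pos a0); rewrite ltxx.
Qed.

Lemma compact_nested_inter (T : ptopologicalType) (K : set T) (P : R -> set T) :
  compact K -> (forall d, 0 < d -> closed (P d)) ->
  (forall d, 0 < d -> K `&` P d !=set0) ->
  (forall d d', 0 < d -> d <= d' -> K `&` P d `<=` P d') ->
  exists2 x, K x & forall d, 0 < d -> P d x.
Proof.
move=> + clP neP mP; rewrite compact_In0 => /(_ R [set d | 0 < d] (fun d => K `&` P d)) cK.
case: cK => [|D sD|x hx].
- by exists P.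
- have [d d0 hd] := seq_pos_lbound (finmap.enum_fset D).
  have [x [Kx Px]] := neP d d0.
  exists x => r /= rD; have r0 : 0 < r by have := sD r rD; rewrite inE.
  by split => //; exact: mP d r d0 (hd r rD r0) x (conj Kx Px).
- by exists x => [|d d0]; [case: (hx 1 ltr01) | case: (hx d d0)].
Qed.

Lemma isnorm_lbound n (N : 'rV[R]_n -> R) : is_norm N ->
  exists2 c, 0 < c & forall x, c * `|x| <= N x.
Proof.
move=> hN; apply: contrapT => noc.
pose S := [set x : 'rV[R]_n | `|x| = 1].
have cS : compact S.
  apply: bounded_closed_compact.
    rewrite /= /bounded_near; near=> M => x /= ->; near: M.
    by apply: nbhs_pinfty_ge; rewrite num_real.
  have -> : S = (fun x => `|x|) @^-1` [set r | r = 1] by [].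
  apply: preimage_closed; last exact: closed_eq.
  by move=> x _; exact: norm_continuous.
have [x Sx /= Nx] : exists2 x, S x & forall d, 0 < d -> N x <= d.
  apply: (compact_nested_inter (P := fun d => N @^-1` [set r | r <= d]) cS).
  - move=> d _; apply: preimage_closed => [x _|]; last exact: closed_le.
    exact: continuous_isnorm.
  - move=> d d0; have [x hx] : exists x, N x < d * `|x|.
      apply: contrapT => hx; apply: noc; exists d => // x.
      by rewrite leNgt; apply/negP => lt; apply: hx; exists x.
    have x0 : 0 < `|x|.
      by rewrite normr_gt0; apply: contraTneq hx => ->; rewrite isnorm0 // normr0 mulr0 ltxx.
    exists (`|x|^-1 *: x); split.
      by rewrite /S /= normrZ normfV normr_id mulVf // gt_eqF.
    by rewrite /= isnormZ // normfV normr_id mulrC ltW // ltr_pdivrMr.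
  - by move=> d d' _ dd' x [_ /le_trans]; apply.
have : N x = 0.
  apply/eqP; rewrite eq_le isnorm_ge0 // andbT leNgt; apply/negP => Nx0.
  by have := Nx _ (divr_gt0 Nx0 (ltr0Sn R 1)); lra.
move/(isnorm_eq0 hN) => x0; move: Sx; rewrite /S /= x0 normr0 => /eqP.
by rewrite eq_sym oner_eq0.
Unshelve. all: by end_near.
Qed.

Lemma compact_unit_sphere n (N : 'rV[R]_n -> R) : is_norm N -> compact (unit_sphere N).
Proof.
move=> hN; have [c c0 hc] := isnorm_lbound hN.
apply: bounded_closed_compact.
  rewrite /= /bounded_near; near=> M => x /= Nx1.
  have : `|x| <= c^-1 by rewrite -(ler_pM2l c0) mulfV ?gt_eqF // -Nx1 hc.
  move/le_trans; apply; near: M.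
  by apply: nbhs_pinfty_ge; rewrite num_real.
have -> : unit_sphere N = N @^-1` [set r | r = 1] by [].
by apply: preimage_closed => [x _|]; [exact: continuous_isnorm | exact: closed_eq].
Unshelve. all: by end_near.
Qed.

End Compactness.

Section Dot.
Variables (R : realType) (m : nat).
Implicit Types (g h u v : 'rV[R]_m).

Definition dot g u : R := \sum_j g 0 j * u 0 j.

Lemma dotDr g u v : dot g (u + v) = dot g u + dot g v.
Proof. by rewrite /dot -big_split; apply: eq_bigr => j _; rewrite mxE mulrDr. Qed.
Lemma dotZr g u a : dot g (a *: u) = a * dot g u.
Proof. by rewrite /dot mulr_sumr; apply: eq_bigr => j _; rewrite mxE mulrCA. Qed.
Lemma dotNr g u : dot g (- u) = - dot g u.
Proof. by rewrite -scaleN1r dotZr mulN1r. Qed.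
Lemma dotDl g h u : dot (g + h) u = dot g u + dot h u.
Proof. by rewrite /dot -big_split; apply: eq_bigr => j _; rewrite mxE mulrDl. Qed.
Lemma dotZl g u a : dot (a *: g) u = a * dot g u.
Proof. by rewrite /dot mulr_sumr; apply: eq_bigr => j _; rewrite mxE mulrA. Qed.
Lemma dot0l u : dot 0 u = 0.
Proof. by rewrite /dot big1 // => j _; rewrite mxE mul0r. Qed.

Lemma dot_deltal u k : dot (delta_mx 0 k) u = u 0 k.
Proof.
rewrite /dot (bigD1 k) //= big1 ?addr0 => [|j jk]; first by rewrite mxE !eqxx mul1r.
by rewrite mxE (negbTE jk) andbF mul0r.
Qed.

Lemma dot_deltar g k : dot g (delta_mx 0 k) = g 0 k.
Proof.
rewrite /dot (bigD1 k) //= big1 ?addr0 => [|j jk]; first by rewrite mxE !eqxx mulr1.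
by rewrite mxE (negbTE jk) andbF mulr0.
Qed.

End Dot.

Section Sublinear.
Variables (R : realType) (m : nat) (p : 'rV[R]_m -> R).
Hypothesis p_subadd : forall u v, p (u + v) <= p u + p v.
Hypothesis p_homo : forall a u, 0 < a -> p (a *: u) <= a * p u.

Lemma sublinearZ a u : 0 < a -> p (a *: u) = a * p u.
Proof.
move=> a0; apply/eqP; rewrite eq_le p_homo //=.
have := @p_homo a^-1 (a *: u); rewrite invr_gt0 scalerA mulVf ?gt_eqF // scale1r.
by move=> /(_ a0); rewrite ler_pdivlMl.
Qed.

Lemma sublinear0 : p 0 = 0.
Proof. by have := @sublinearZ 2 0 (ltr0Sn R 1); rewrite scaler0; lra. Qed.

Lemma sublinearN_le u : - p (- u) <= p u.
Proof. by have := p_subadd u (- u); rewrite subrr sublinear0; lra. Qed.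

Definition supported_below k (u : 'rV[R]_m) := forall j : 'I_m, (k <= j)%N -> u 0 j = 0.

(* The value on the new coordinate is [sup L], which [key] squeezes between
   the lower and upper constraints imposed by domination by [p]. *)
Lemma sublinear_minorant_extend k (hk : (k < m)%N) (g : 'rV[R]_m) :
  (forall u, supported_below k u -> dot g u <= p u) ->
  exists g', forall u, supported_below k.+1 u -> dot g' u <= p u.
Proof.
move=> hg; pose e : 'rV[R]_m := delta_mx 0 (Ordinal hk).
pose S := supported_below k.
have SD u v : S u -> S v -> S (u + v) by move=> hu hv j hj; rewrite mxE hu ?hv ?addr0.
have SZ a u : S u -> S (a *: u) by move=> hu j hj; rewrite mxE hu ?mulr0.
have key u u' : S u -> S u' -> dot g u' - p (u' - e) <= p (u + e) - dot g u.
  move=> hu hu'; have := hg _ (SD _ _ hu hu'); rewrite dotDr.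
  have := p_subadd (u + e) (u' - e); rewrite addrACA subrr addr0; lra.
pose L := [set dot g u - p (u - e) | u in S].
have S0 : S 0 by move=> j _; rewrite mxE.
have hasL : has_sup L.
  split; first by exists (dot g 0 - p (0 - e)), 0.
  by exists (p (0 + e) - dot g 0) => _ [u hu <-]; exact: key.
have cge u : S u -> dot g u - p (u - e) <= sup L.
  by move=> hu; apply: sup_upper_bound => //; exists u.
have cle u : S u -> sup L <= p (u + e) - dot g u.
  by move=> hu; apply: ge_sup; [case: hasL | move=> _ [u' hu' <-]; exact: key].
exists (g + (sup L - g 0 (Ordinal hk)) *: e) => u hu.
pose a := u 0 (Ordinal hk); pose u0 := u - a *: e.
have Su0 : S u0.
  move=> j hj; rewrite !mxE; have [->|jk] := eqVneq j (Ordinal hk).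
    by rewrite !eqxx mulr1 subrr.
  rewrite andbF mulr0 subr0; apply: hu.
  by rewrite ltn_neqAle hj andbT; apply: contra jk => /eqP hjk; apply/eqP/val_inj.
have ue : u = u0 + a *: e by rewrite subrK.
have -> : dot (g + (sup L - g 0 (Ordinal hk)) *: e) u = dot g u0 + a * sup L.
  by rewrite dotDl dotZl dot_deltal -/a {1}ue dotDr dotZr dot_deltar; ring.
have [a0|a0|a0] := ltrgt0P a.
- have := ler_wpM2l (ltW a0) (cle _ (SZ a^-1 _ Su0)).
  rewrite dotZr mulrBr mulrA mulfV ?gt_eqF // mul1r -sublinearZ //.
  by rewrite scalerDr scalerA mulfV ?gt_eqF // scale1r -ue; lra.
- have b0 : 0 < - a by rewrite oppr_gt0.
  have := ler_wpM2l (ltW b0) (cge _ (SZ (- a)^-1 _ Su0)).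
  rewrite dotZr mulrBr mulrA mulfV ?gt_eqF // mul1r -sublinearZ //.
  by rewrite scalerBr scalerA mulfV ?gt_eqF // scale1r scaleNr opprK -ue; lra.
- have u0E : u0 = u by rewrite /u0 a0 scale0r subr0.
  by rewrite a0 mul0r addr0 -u0E; exact: hg.
Qed.

Lemma sublinear_minorant : exists g, forall u, dot g u <= p u.
Proof.
suff /(_ m (leqnn m)) [g hg] : forall k, (k <= m)%N ->
    exists g, forall u, supported_below k u -> dot g u <= p u.
  by exists g => u; apply: hg => j; rewrite leqNgt ltn_ord.
elim=> [_|k IH hk]; last by have [g /(sublinear_minorant_extend hk)] := IH (ltnW hk).
exists 0 => u hu; have -> : u = 0 by apply/rowP => j; rewrite mxE hu.
by rewrite dot0l sublinear0.
Qed.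

End Sublinear.

Section HahnBanach.
Variables (R : realType) (m : nat) (p : 'rV[R]_m -> R) (z : 'rV[R]_m).
Hypothesis p_subadd : forall u v, p (u + v) <= p u + p v.
Hypothesis p_homo : forall a u, 0 < a -> p (a *: u) <= a * p u.
Let sublinearZ := sublinearZ p_homo.
Let sublinear0 := sublinear0 p_homo.
Let sublinearN_le := sublinearN_le p_subadd p_homo.

(* [q] is sublinear, below [p], and [q (- z) <= - p z]; hence any linear
   minorant of [q] agrees with [p] at [z]. *)
Let Ez u := [set p (u - a *: z) + a * p z | a in [set: R]].
Let q u := inf (Ez u).

Let Ez_lb u x : Ez u x -> - p (- u) <= x.
Proof.
move=> [a _ <-].
have h1 : p (- (a *: z)) <= p (u - a *: z) + p (- u).
  by have := p_subadd (u - a *: z) (- u); rewrite addrAC subrr add0r.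
have h2 : 0 <= a * p z + p (- (a *: z)).
  have [a0|a0|->] := ltrgt0P a.
  - by rewrite -scalerN sublinearZ //; have := sublinearN_le z; nra.
  - by rewrite -scaleNr sublinearZ ?oppr_gt0 //; lra.
  - by rewrite scale0r oppr0 sublinear0 mul0r addr0.
lra.
Qed.

Let Ez_ne u : Ez u !=set0.
Proof. by exists (p (u - 0 *: z) + 0 * p z), 0. Qed.

Let q_le u x : Ez u x -> q u <= x.
Proof. by move=> hx; apply: ge_inf => //; exists (- p (- u)) => y; exact: Ez_lb. Qed.

Let q_le_p u : q u <= p u.
Proof. by apply: q_le; exists 0 => //; rewrite scale0r subr0 mul0r addr0. Qed.

Let q_subadd u v : q (u + v) <= q u + q v.
Proof.
have h x y : Ez u x -> Ez v y -> q (u + v) <= x + y.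
  move=> [a _ <-] [b _ <-].
  apply: le_trans (q_le (_ : Ez (u + v) _)) _; first by exists (a + b).
  by have := p_subadd (u - a *: z) (v - b *: z); rewrite addrACA -opprD -scalerDl; lra.
have h2 y : Ez v y -> q (u + v) - y <= q u.
  by move=> hy; apply: lb_le_inf (Ez_ne u) _ => x hx; have := h x y hx hy; lra.
suff : q (u + v) - q u <= q v by lra.
by apply: lb_le_inf (Ez_ne v) _ => y hy; have := h2 y hy; lra.
Qed.

Let q_homo c u : 0 < c -> q (c *: u) <= c * q u.
Proof.
move=> c0; rewrite -ler_pdivrMl //; apply: lb_le_inf (Ez_ne u) _.
move=> _ [a _ <-]; rewrite ler_pdivrMl //.
apply: le_trans (q_le (_ : Ez (c *: u) _)) _; first by exists (c * a).
by rewrite -scalerA -scalerBr sublinearZ //; lra.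
Qed.

Lemma hahn_banach : exists g, (forall u, dot g u <= p u) /\ dot g z = p z.
Proof.
have [g hg] := sublinear_minorant q_subadd q_homo.
exists g; split => [u|]; first exact: le_trans (hg u) (q_le_p u).
apply/eqP; rewrite eq_le; apply/andP; split.
  apply: le_trans (hg z) (q_le _); exists 1 => //.
  by rewrite scale1r subrr sublinear0 mul1r add0r.
suff : dot g (- z) <= - p z by rewrite dotNr; lra.
apply: le_trans (hg _) (q_le _); exists (-1) => //.
by rewrite scaleN1r opprK addNr sublinear0 mulN1r add0r.
Qed.

End HahnBanach.

Section NormSlope.
Variables (R : realType) (m : nat) (N : 'rV[R]_m -> R).
Hypothesis hN : is_norm N.

Definition norming_functional (y g : 'rV[R]_m) :=
  (forall u, dot g u <= N u) /\ dot g y = 1.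

Lemma norming_functional_abs y g u : norming_functional y g -> `|dot g u| <= N u.
Proof.
move=> [hg _]; have := hg (- u); rewrite dotNr isnormN // ler_norml; have := hg u; lra.
Qed.

Definition norm_slope (y w : 'rV[R]_m) (s : R) := (N (y + s *: w) - 1) / s.

(* Convexity of [s |-> N (y + s *: w)], which is at most 1 at [s = 0]. *)
Lemma norm_slope_mono y w t s : N y <= 1 -> 0 < t -> t <= s ->
  norm_slope y w t <= norm_slope y w s.
Proof.
move=> Ny t0 ts; have s0 : 0 < s by exact: lt_le_trans ts.
have r0 : 0 <= t / s by rewrite divr_ge0 // ltW.
have r1 : 0 <= 1 - t / s by rewrite subr_ge0 ler_pdivrMr // mul1r.
have e : y + t *: w = (1 - t / s) *: y + (t / s) *: (y + s *: w).
  by rewrite scalerDr scalerA mulfVK ?gt_eqF // addrA -scalerDl subrK scale1r.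
have := isnormD hN ((1 - t / s) *: y) ((t / s) *: (y + s *: w)).
rewrite -e !isnormZ // !ger0_norm // => /(ler_wpM2l (ltW s0)).
have -> : s * ((1 - t / s) * N y + t / s * N (y + s *: w)) =
          (s - t) * N y + t * N (y + s *: w) by field; rewrite gt_eqF.
have : (s - t) * N y <= s - t by rewrite ler_piMr // subr_ge0.
by rewrite /norm_slope ler_pdivrMr // mulrAC ler_pdivlMr //; lra.
Qed.

Variable y : 'rV[R]_m.
Hypothesis Ny : N y = 1.

Lemma exists_norming_functional : exists g, norming_functional y g.
Proof.
have N_homo a u : 0 < a -> N (a *: u) <= a * N u by move=> a0; rewrite isnormZ // gtr0_norm.
have [g [hg gy]] := hahn_banach y (isnormD hN) N_homo.
by exists g; split; rewrite // gy.
Qed.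

Let Ed w := [set norm_slope y w s | s in [set s : R | 0 < s]].
Let dderiv w := inf (Ed w).

Let Ed_ne w : Ed w !=set0.
Proof. by exists (norm_slope y w 1), 1 => //=; exact: ltr01. Qed.

Let Ed_lbound w : has_lbound (Ed w).
Proof.
exists (- N w) => _ [r r0 <-]; rewrite ler_pdivlMr //.
have := isnormD hN (y + r *: w) (- (r *: w)).
by rewrite addrK isnormN // isnormZ // (ger0_norm (ltW r0)) Ny; lra.
Qed.

Let dderiv_le w s : 0 < s -> dderiv w <= norm_slope y w s.
Proof. by move=> s0; apply: (ge_inf (Ed_lbound w)); exists s. Qed.

Let dderiv_subadd u v : dderiv (u + v) <= dderiv u + dderiv v.
Proof.
have h s1 s2 : 0 < s1 -> 0 < s2 ->
    dderiv (u + v) <= norm_slope y u s1 + norm_slope y v s2.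
  move=> s10 s20; pose s := Num.min s1 s2.
  have s0 : 0 < s by rewrite lt_min s10 s20.
  apply: le_trans (dderiv_le _ (divr_gt0 s0 (ltr0Sn R 1))) _.
  apply: (@le_trans _ _ (norm_slope y u s + norm_slope y v s)); last first.
    by rewrite lerD // norm_slope_mono ?Ny // ge_min lexx ?orbT.
  have e : y + s / 2 *: (u + v) = 2^-1 *: (y + s *: u) + 2^-1 *: (y + s *: v).
    by apply/rowP => j; rewrite !mxE; field.
  have := isnormD hN (2^-1 *: (y + s *: u)) (2^-1 *: (y + s *: v)).
  rewrite -e !isnormZ // ger0_norm ?invr_ge0 // /norm_slope => h.
  rewrite -mulrDl ler_pdivrMr ?divr_gt0 //.
  have -> : (N (y + s *: u) - 1 + (N (y + s *: v) - 1)) / s * (s / 2) =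
            (N (y + s *: u) - 1 + (N (y + s *: v) - 1)) / 2 by field; rewrite gt_eqF.
  lra.
have h2 s2 : 0 < s2 -> dderiv (u + v) - norm_slope y v s2 <= dderiv u.
  by move=> s20; apply: lb_le_inf (Ed_ne u) _ => _ [s1 s10 <-]; have := h s1 s2 s10 s20; lra.
suff : dderiv (u + v) - dderiv u <= dderiv v by lra.
by apply: lb_le_inf (Ed_ne v) _ => _ [s2 s20 <-]; have := h2 s2 s20; lra.
Qed.

Let dderiv_homo c w : 0 < c -> dderiv (c *: w) <= c * dderiv w.
Proof.
move=> c0; rewrite -ler_pdivrMl //; apply: lb_le_inf (Ed_ne w) _.
move=> _ [s s0 <-]; rewrite ler_pdivrMl //.
apply: le_trans (dderiv_le _ (divr_gt0 s0 c0)) _.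
by rewrite /norm_slope scalerA mulfVK ?gt_eqF // invf_div mulrA mulrAC [c * _]mulrC.
Qed.

(* Hahn-Banach applied to the sublinear [dderiv] yields a norming functional
   at [y] that attains [dderiv z], so [dderiv z <= 0]. *)
Lemma norm_slope_small z :
  (forall g, norming_functional y g -> dot g z <= 0) ->
  forall eps, 0 < eps -> exists2 s, 0 < s & N (y + s *: z) <= 1 + eps * s.
Proof.
move=> hz eps e0.
have [g [hg gz]] := hahn_banach z dderiv_subadd dderiv_homo.
have gN u : dot g u <= N u.
  apply: le_trans (hg u) (le_trans (dderiv_le _ ltr01) _).
  by rewrite /norm_slope divr1 scale1r; have := isnormD hN y u; rewrite Ny; lra.
have gy : dot g y = 1.
  apply/eqP; rewrite eq_le -{1}Ny gN /=.
  have h2 : 0 < (2 : R)^-1 by rewrite invr_gt0.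
  have := le_trans (hg (- y)) (dderiv_le _ h2); rewrite /norm_slope.
  have -> : y + 2^-1 *: - y = 2^-1 *: y.
    by rewrite scalerN -{1}(scale1r y) -scalerBl; congr (_ *: _); field.
  rewrite dotNr isnormZ // Ny mulr1 (ger0_norm (ltW h2)).
  have -> : (2^-1 - 1) / 2^-1 = - 1 :> R by field.
  lra.
have dz : dderiv z <= 0 by rewrite -gz; exact: hz.
have [_ [s /= s0 <-] hs] := inf_adherent e0 (conj (Ed_ne z) (Ed_lbound z)).
by exists s => //; move: hs; rewrite -/(dderiv z) /norm_slope ltr_pdivrMr //; nra.
Qed.

End NormSlope.

Section Pairing.
Variables (R : realType) (n m : nat).
Implicit Types (A B C : 'M[R]_(n, m)).

Fact pairing_is_linear B : linear (pairing B).
Proof.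
move=> a A C; rewrite /pairing scaler_sumr -big_split; apply: eq_bigr => i _ /=.
by rewrite scaler_sumr -big_split; apply: eq_bigr => j _; rewrite !mxE mulrDr mulrCA.
Qed.

HB.instance Definition _ B :=
  GRing.isLinear.Build R 'M[R]_(n, m) R *%R (pairing B) (pairing_is_linear B).

Lemma pairing_self_gt0 B : B != 0 -> 0 < pairing B B.
Proof.
move=> B0; have sq (r : R) : 0 <= r * r by rewrite -expr2 sqr_ge0.
rewrite lt_neqAle eq_sym sumr_ge0 ?andbT => [|i _]; last exact: sumr_ge0.
apply: contra B0 => /eqP /(psumr_eq0P (fun i _ => sumr_ge0 _ (fun j _ => sq _))) Bi.
apply/eqP/matrixP => i j; rewrite mxE.
have /eqP := psumr_eq0P (fun j _ => sq _) (Bi i isT) (i := j) isT.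
by rewrite mulf_eq0 orbb => /eqP.
Qed.

Lemma pairing_tensor (x : 'rV[R]_n) (g : 'rV[R]_m) A :
  pairing (x^T *m g) A = dot g (x *m A).
Proof.
rewrite /pairing /dot exchange_big /=; apply: eq_bigr => j _.
rewrite mxE mulr_sumr; apply: eq_bigr => i _.
by rewrite !mxE big_ord1 !mxE; ring.
Qed.

(* [projv U] is not an orthogonal projection, so [A] is built to satisfy
   [pairing D A = pairing w (D - projv U D)], which vanishes on [U]. *)
Lemma pairing_separate (U : {vspace 'M[R]_(n, m)}) B : B \notin U ->
  exists A, (forall D, D \in U -> pairing D A = 0) /\ 0 < pairing B A.
Proof.
move=> BU; pose w := B - projv U B.
pose A : 'M[R]_(n, m) := \matrix_(i, j) pairing w (delta_mx i j - projv U (delta_mx i j)).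
have pA D : pairing D A = pairing w (D - projv U D).
  rewrite {2 3}(matrix_sum_delta D) linear_sum -sumrB linear_sum.
  apply: eq_bigr => i _ /=; rewrite linear_sum -sumrB linear_sum.
  by apply: eq_bigr => j _ /=; rewrite linearZ -scalerBr linearZ mxE.
exists A; split => [D DU|]; first by rewrite pA projv_id // subrr linear0.
rewrite pA pairing_self_gt0 //; apply: contra BU => /eqP w0.
by rewrite -[B]subr0 -w0 opprB addrC subrK memv_proj.
Qed.

End Pairing.

Section OpNorm.
Variables (R : realType) (n m : nat) (NX : 'rV[R]_n -> R) (NY : 'rV[R]_m -> R).
Hypotheses (hNX : is_norm NX) (hNY : is_norm NY).

Lemma op_norm_bounded A : exists M, forall x, NX x = 1 -> NY (x *m A) <= M.
Proof.
have [c c0 hc] := isnorm_lbound hNX.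
exists (c^-1 * \sum_i NY (row i A)) => x hx.
apply: le_trans (isnorm_mulmx_le hNY A x) _; apply: ler_wpM2r.
  by rewrite sumr_ge0 // => i _; exact: isnorm_ge0.
by rewrite -(ler_pM2l c0) mulfV ?gt_eqF // -hx hc.
Qed.

Lemma op_norm_ge A x : NX x = 1 -> NY (x *m A) <= op_norm NX NY A.
Proof.
move=> hx; apply: sup_upper_bound; last by exists x.
split; first by exists (NY (x *m A)), x.
by have [M hM] := op_norm_bounded A; exists M => _ [x' hx' <-]; exact: hM.
Qed.

Lemma op_norm_le A b : unit_sphere NX !=set0 ->
  (forall x, NX x = 1 -> NY (x *m A) <= b) -> op_norm NX NY A <= b.
Proof.
move=> [x hx] hb; apply: ge_sup; first by exists (NY (x *m A)), x.
by move=> _ [x' hx' <-]; exact: hb.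
Qed.

Lemma unit_sphere_neq0 A : op_norm NX NY A != 0 -> unit_sphere NX !=set0.
Proof.
move=> A0; apply/set0P; apply: contra A0 => /eqP S0.
by rewrite /op_norm S0 image_set0 sup0.
Qed.

End OpNorm.

Section TensorSpace.
Variables (R : fieldType) (n m : nat).

Lemma exists_span_seq (vT : vectType R) (S : set vT) :
  exists s : seq vT, (forall x, x \in s -> S x) /\ (forall x, S x -> x \in <<s>>%VS).
Proof.
pose P k := `[< exists s : seq vT, (forall x, x \in s -> S x) /\ \dim <<s>>%VS = k >].
have P0 : exists k, P k.
  by exists 0%N; apply/asboolP; exists [::]; rewrite span_nil dimv0.
have Pb k : P k -> (k <= dim vT)%N.
  by move=> /asboolP [s [_ <-]]; rewrite -dimvf dimvS // subvf.
have [k /asboolP [s [sS ds]] kmax] := ex_maxnP P0 Pb.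
exists s; split => // x Sx; apply: contrapT => /negP xs.
have sub : (<<s>> <= <<x :: s>>)%VS by rewrite span_cons addvSr.
have /kmax : P (\dim <<x :: s>>%VS).
  by apply/asboolP; exists (x :: s); split => // y; rewrite in_cons => /orP[/eqP ->|/sS].
rewrite -ds => le; have [_] := dimv_leqif_sup sub.
rewrite eqn_leq le dimvS // => /esym /subvP sub'.
by rewrite sub' ?memv_span ?mem_head in xs.
Qed.

Lemma dimv_gt0 (vT : vectType R) (U : {vspace vT}) x :
  x \in U -> x != 0 -> (0 < \dim U)%N.
Proof.
by move=> xU; rewrite lt0n dimv_eq0; apply: contra => /eqP U0; rewrite -memv0 -U0.
Qed.

Lemma dimv_rV_le k (U : {vspace 'rV[R]_k}) : (\dim U <= k)%N.
Proof. by have := dimvS (subvf U); rewrite dimvf dim_matrix mul1r. Qed.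

Definition basis_mx k (V : {vspace 'rV[R]_k}) : 'M[R]_(\dim V, k) :=
  \matrix_(i < \dim V) (vbasis V)`_i.

Lemma basis_mx_inj k l (V : {vspace 'rV[R]_k}) (M : 'M[R]_(l, \dim V)) :
  M *m basis_mx V = 0 -> M = 0.
Proof.
move=> hM; apply/row_matrixP => r; rewrite row0.
have : row r M *m basis_mx V = 0 by rewrite -row_mul hM row0.
have /freeP /(_ (fun i => M r i)) := basis_free (vbasisP V).
rewrite mulmx_sum_row; under [in X in _ -> X -> _]eq_bigr do rewrite rowK mxE.
by move=> h /h h0; apply/rowP => i; rewrite !mxE h0.
Qed.

Lemma basis_mx_coord k (V : {vspace 'rV[R]_k}) x : x \in V ->
  exists a : 'rV[R]_(\dim V), x = a *m basis_mx V.
Proof.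
move=> xV; exists (\row_i coord (vbasis V) i x).
rewrite mulmx_sum_row {1}(coord_vbasis xV); apply: eq_bigr => i _.
by rewrite rowK mxE.
Qed.

Implicit Types (V : {vspace 'rV[R]_n}) (W : {vspace 'rV[R]_m}).

Definition tensor_map V W (C : 'M[R]_(\dim V, \dim W)) : 'M[R]_(n, m) :=
  (basis_mx V)^T *m C *m basis_mx W.
Arguments tensor_map : clear implicits.

Fact tensor_map_is_linear V W : linear (tensor_map V W).
Proof. by move=> a C D; rewrite /tensor_map mulmxDr mulmxDl -!scalemxAr -scalemxAl. Qed.

HB.instance Definition _ V W := GRing.isLinear.Build R _ _ _ (tensor_map V W)
  (@tensor_map_is_linear V W).

(* The algebraic tensor product [V ⊗ W], realized inside [L(X, Y) = 'M_(n, m)]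
   as the span of the rank-one matrices [x^T *m g]. *)
Definition tensorv V W : {vspace 'M[R]_(n, m)} := limg (linfun (tensor_map V W)).

Lemma dim_tensorv V W : \dim (tensorv V W) = (\dim V * \dim W)%N.
Proof.
rewrite limg_dim_eq ?dimvf ?dim_matrix // capfv; apply/eqP/lker0P => C D.
rewrite !lfunE /= => /eqP; rewrite -subr_eq0 -linearB => /eqP /basis_mx_inj.
move=> /(congr1 trmx); rewrite trmx_mul trmxK trmx0 => /basis_mx_inj.
by move=> /(congr1 trmx); rewrite trmxK trmx0 => /eqP; rewrite subr_eq0 => /eqP.
Qed.

Lemma tensorv_tensor V W x g : x \in V -> g \in W -> x^T *m g \in tensorv V W.
Proof.
move=> /basis_mx_coord [a ->] /basis_mx_coord [b ->].
have -> : (a *m basis_mx V)^T *m (b *m basis_mx W) = tensor_map V W (a^T *m b).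
  by rewrite /tensor_map trmx_mul !mulmxA.
by rewrite -[tensor_map _ _ _]lfunE memv_img ?memvf.
Qed.

Lemma tensorv_span_sub (U : {vspace 'M[R]_(n, m)}) sV sW :
  (forall x g, x \in sV -> g \in sW -> x^T *m g \in U) ->
  (tensorv <<sV>> <<sW>> <= U)%VS.
Proof.
move=> hU.
have hU1 x g : x \in <<sV>>%VS -> g \in sW -> x^T *m g \in U.
  move=> xV gW; have : x \in (linfun (mulmxr g \o @trmx R 1 n) @^-1: U)%VS.
    move: x xV; apply/subvP/span_subvP => x xV.
    by rewrite -memv_preim lfunE; exact: hU.
  by rewrite -memv_preim lfunE.
have hU2 x g : x \in <<sV>>%VS -> g \in <<sW>>%VS -> x^T *m g \in U.
  move=> xV gW; have : g \in (linfun (@mulmx R n 1 m x^T) @^-1: U)%VS.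
    move: g gW; apply/subvP/span_subvP => g gW.
    by rewrite -memv_preim lfunE; exact: hU1.
  by rewrite -memv_preim lfunE.
apply/subvP => _ /memv_imgP [C _ ->]; rewrite lfunE /=.
rewrite (matrix_sum_delta C) linear_sum; apply: memv_suml => i _.
rewrite linear_sum; apply: memv_suml => j _; rewrite linearZ; apply: memvZ.
change (tensor_map <<sV>> <<sW>> (delta_mx i j) \in U).
rewrite /tensor_map -(@mul_delta_mx _ _ 1 _ 0 i j) mulmxA -trmx_delta -trmx_mul -rowE.
by rewrite -mulmxA -rowE !rowK; apply: hU2; apply: vbasis_mem;
  rewrite mem_nth ?size_tuple.
Qed.

End TensorSpace.

Section SupportFunctionals.
Variables (R : realType) (n m : nat) (NX : 'rV[R]_n -> R) (NY : 'rV[R]_m -> R).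
Hypotheses (hNX : is_norm NX) (hNY : is_norm NY).
Variable T : 'M[R]_(n, m).
Hypothesis hT : op_norm NX NY T = 1.

Lemma op_norm_le1 x : NX x = 1 -> NY (x *m T) <= 1.
Proof. by move=> Nx; rewrite -hT; exact: op_norm_ge hNX hNY T x Nx. Qed.

Lemma support_functional_tensor x g : NX x = 1 ->
  norming_functional NY (x *m T) g -> support_functionals NX NY T (x^T *m g).
Proof.
move=> Nx hg; split; last by rewrite pairing_tensor; case: hg.
rewrite /dual_op_norm; set E := [set `|pairing _ A| | A in _].
have E1 : E 1 by exists T; rewrite /= ?hT // pairing_tensor (proj2 hg) normr1.
have E_le1 : ubound E 1.
  move=> _ [A /= hA <-]; rewrite pairing_tensor.
  apply: le_trans (norming_functional_abs hNY _ hg) _.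
  exact: le_trans (op_norm_ge hNX hNY _ Nx) hA.
apply/eqP; rewrite eq_le ge_sup //=; last by exists 1.
by apply: sup_upper_bound => //; split; exists 1.
Qed.

Lemma support_functional_pairing_le B C : support_functionals NX NY T B ->
  (forall x, NX x = 1 -> NY (x *m C) <= 1) -> pairing B C <= 1.
Proof.
move=> [hB _] hC; rewrite /dual_op_norm in hB.
set E := [set `|pairing B A| | A in _] in hB.
have hE : has_sup E.
  by apply: contrapT => hE; move: hB; rewrite sup_out // => /eqP; rewrite eq_sym oner_eq0.
apply: le_trans (ler_norm _) _; rewrite -hB; apply: sup_upper_bound => //.
exists C => //; apply: op_norm_le hC => //.
by apply: (@unit_sphere_neq0 _ _ _ NX NY T); rewrite hT oner_neq0.
Qed.

End SupportFunctionals.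

Lemma convex_image_two_points (R : realType) n m (F : set 'rV[R]_n) (T : 'M[R]_(n, m))
    y1 y2 :
  convex_set F -> (forall x, F x -> x *m T = y1 \/ x *m T = y2) ->
  forall x x', F x -> F x' -> x *m T = x' *m T.
Proof.
move=> Fconv FT x x' Fx Fx'.
have mid (a b : 'rV[R]_m) : (1 - 2^-1) *: a + 2^-1 *: b \in [:: a; b] -> a = b.
  by rewrite !inE => /orP[] /eqP /rowP h; apply/rowP => j; have := h j; rewrite !mxE; lra.
have /FT : F ((1 - 2^-1) *: x + 2^-1 *: x').
  by apply: Fconv; rewrite ?invr_ge0 ?invf_le1 ?ler1n.
rewrite mulmxDl -!scalemxAl.
by case: (FT x Fx) (FT x' Fx') => -> [] -> [] h //; apply: mid; rewrite h !inE eqxx ?orbT.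
Qed.

Section Smoothness.
Variables (R : realType) (n m : nat) (NX : 'rV[R]_n -> R) (NY : 'rV[R]_m -> R).
Hypotheses (hNX : is_norm NX) (hNY : is_norm NY).
Variables (T : 'M[R]_(n, m)) (F : set 'rV[R]_n) (x0 : 'rV[R]_n) (y0 : 'rV[R]_m).
Hypothesis hT : op_norm NX NY T = 1.
Hypothesis hM : norm_attain NX NY T = F `|` [set - x | x in F].
Hypothesis FT : forall x, F x -> x *m T = y0.
Hypothesis Fx0 : F x0.

Let F_attain x : F x -> norm_attain NX NY T x.
Proof. by rewrite hM; left. Qed.

Let Ny0 : NY y0 = 1.
Proof. by have [_] := F_attain Fx0; rewrite FT // hT. Qed.

Let attain_F x : NX x = 1 -> NY (x *m T) = 1 -> F x \/ F (- x).
Proof.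
move=> Nx NxT; have : norm_attain NX NY T x by split; rewrite // hT.
by rewrite hM => -[Fx|[x' Fx' <-]]; [left | right; rewrite opprK].
Qed.

Local Notation J := (support_functionals NX NY T).
Local Notation G := (norming_functional NY y0).

Section Perturbation.
Variable A : 'M[R]_(n, m).
Hypothesis A_ann : forall x g, F x -> G g -> dot g (x *m A) = 0.

Lemma perturb_slope_small x eps : NX x = 1 -> 0 < eps ->
  exists2 s, 0 < s & NY (x *m T + s *: (x *m A)) < 1 + eps * s.
Proof.
move=> Nx e0; have := op_norm_le1 hNX hNY hT Nx; rewrite le_eqVlt => /orP[/eqP NxT|NxT].
  have [x' Fx' hx'] : exists2 x', F x' &
      forall s, NY (x *m T + s *: (x *m A)) = NY (y0 + s *: (x' *m A)).
    case: (attain_F Nx NxT) => [Fx|Fnx]; first by exists x => // s; rewrite FT.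
    by exists (- x) => // s; rewrite -(isnormN hNY) -(FT Fnx) !mulNmx opprD scalerN.
  have x'A_le0 g : G g -> dot g (x' *m A) <= 0 by move=> Gg; rewrite A_ann.
  have [s s0 hs] := norm_slope_small hNY Ny0 x'A_le0 (divr_gt0 e0 (ltr0Sn R 1)).
  by exists s; rewrite // hx'; apply: le_lt_trans hs _; nra.
pose s := (1 - NY (x *m T)) / (NY (x *m A) + 1).
have NxA : 0 < NY (x *m A) + 1 by rewrite ltr_wpDl ?isnorm_ge0.
have s0 : 0 < s by rewrite divr_gt0 ?subr_gt0.
have hs : s * (NY (x *m A) + 1) = 1 - NY (x *m T) by rewrite mulfVK ?gt_eqF.
exists s => //; apply: le_lt_trans (isnormD hNY _ _) _.
rewrite isnormZ // gtr0_norm //; have := mulr_gt0 e0 s0; nra.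
Qed.

Lemma perturb_op_norm_le eps : 0 < eps -> exists2 t, 0 < t &
  forall x, NX x = 1 -> NY (x *m (T + t *: A)) <= 1 + eps * t.
Proof.
move=> e0; apply: contrapT => noT.
pose P d := [set x | 1 + eps * d <= NY (x *m (T + d *: A))].
have [x Nx Px] : exists2 x, unit_sphere NX x & forall d, 0 < d -> P d x.
  apply: compact_nested_inter (compact_unit_sphere hNX) _ _ _.
  - move=> d _.
    rewrite (_ : P d = (fun x => NY (x *m (T + d *: A))) @^-1` [set r | 1 + eps * d <= r]) //.
    by apply: preimage_closed => [x _|]; [exact: continuous_isnorm_mulmx | exact: closed_ge].
  - move=> d d0; apply: contrapT => noP; apply: noT; exists d => // x Nx.
    by rewrite leNgt; apply/negP => lt; apply: noP; exists x; split => //; exact: ltW.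
  - move=> d d' d0 dd' x [Nx]; rewrite /P /= !mulmxDr -!scalemxAr => Pd.
    have d'0 : 0 < d' := lt_le_trans d0 dd'.
    have := norm_slope_mono hNY (x *m A) (op_norm_le1 hNX hNY hT Nx) d0 dd'.
    by rewrite /norm_slope ler_pdivrMr // mulrAC ler_pdivlMr //; nra.
have [s s0] := perturb_slope_small Nx e0.
by have := Px s s0; rewrite /P /= mulmxDr -scalemxAr; lra.
Qed.

Lemma support_functional_pairing_le0 B : J B -> pairing B A <= 0.
Proof.
move=> JB; rewrite leNgt; apply/negP => BA0.
have [t t0 ht] := perturb_op_norm_le (divr_gt0 BA0 (ltr0Sn R 1)).
set c := 1 + _ * t in ht; have c0 : 0 < c by rewrite ltr_wpDr // ltW // mulr_gt0 ?divr_gt0.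
have hC x : NX x = 1 -> NY (x *m (c^-1 *: (T + t *: A))) <= 1.
  move=> Nx; rewrite -scalemxAr isnormZ // gtr0_norm ?invr_gt0 //.
  by rewrite ler_pdivrMl // mulr1 ht.
have := support_functional_pairing_le hT JB hC.
rewrite linearZ linearD linearZ /= (proj2 JB) ler_pdivrMl // mulr1 /c.
by have := mulr_gt0 t0 BA0; nra.
Qed.

End Perturbation.

Variables (sF : seq 'rV[R]_n) (sG : seq 'rV[R]_m).
Hypotheses (sF_F : forall x, x \in sF -> F x) (F_sF : forall x, F x -> x \in <<sF>>%VS).
Hypotheses (sG_G : forall g, g \in sG -> G g) (G_sG : forall g, G g -> g \in <<sG>>%VS).

Lemma support_functional_mem_tensorv B : J B -> B \in tensorv <<sF>> <<sG>>.
Proof.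
move=> JB; apply: contraT => /pairing_separate [A [A_ann BA0]].
suff : pairing B A <= 0 by rewrite leNgt BA0.
apply: support_functional_pairing_le0 JB => x g Fx Gg.
by rewrite -pairing_tensor A_ann // tensorv_tensor ?F_sF ?G_sG.
Qed.

Lemma span_support_functionals sJ :
  (forall B, B \in sJ -> J B) -> (forall B, J B -> B \in <<sJ>>%VS) ->
  <<sJ>>%VS = tensorv <<sF>> <<sG>>.
Proof.
move=> sJ_J J_sJ; apply/eqP; rewrite eqEsubv; apply/andP; split.
  by apply/span_subvP => B /sJ_J /support_functional_mem_tensorv.
apply: tensorv_span_sub => x g /sF_F Fx /sG_G Gg; apply: J_sJ.
have [Nx _] := F_attain Fx.
by apply: support_functional_tensor; rewrite // FT.
Qed.

End Smoothness.

Theorem mainTheorem14 (R : realType) (n m : nat)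
  (NX : 'rV[R]_n -> R) (NY : 'rV[R]_m -> R)
  (hNX : is_norm NX) (hNY : is_norm NY)
  (hpX : polyhedral NX) (hpY : polyhedral NY)
  (T : 'M[R]_(n, m)) (hT : op_norm NX NY T = 1)
  (F : set 'rV[R]_n) (hF : face NX F)
  (hM : norm_attain NX NY T = F `|` [set - x | x in F])
  (y1 y2 : 'rV[R]_m) (hy : y1 <> y2)
  (himg : [set x *m T | x in norm_attain NX NY T] = [set y1; y2])
  (k : nat) (hk : k_smooth NX NY T k) :
  exists p q : nat, [/\ (1 <= p <= n)%N, (1 <= q <= m)%N & k = (p * q)%N].
Proof.
case: hF => Fconv _ _.
have imT x : norm_attain NX NY T x -> x *m T = y1 \/ x *m T = y2.
  by move=> Mx; rewrite -[_ \/ _]/([set y1; y2] _) -himg; exists x.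
have [x0 Fx0] : exists x0, F x0.
  have : [set x *m T | x in norm_attain NX NY T] y1 by rewrite himg; left.
  by case=> x; rewrite hM => -[Fx|[x' Fx' _]] _; [exists x | exists x'].
have FT x : F x -> x *m T = x0 *m T.
  move=> Fx; apply: (convex_image_two_points Fconv) Fx Fx0 => x' Fx'.
  by apply: imT; rewrite hM; left.
have [Nx0 NTx0] : norm_attain NX NY T x0 by rewrite hM; left.
have [g0 Gg0] := exists_norming_functional hNY (y := x0 *m T) (etrans NTx0 hT).
have [sF [sF_F F_sF]] := exists_span_seq F.
have [sG [sG_G G_sG]] := exists_span_seq (norming_functional NY (x0 *m T)).
case: hk => sJ [sJ_J J_sJ <-].
rewrite (span_support_functionals hNX hNY hT hM FT Fx0 sF_F F_sF sG_G G_sG sJ_J J_sJ).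
exists (\dim <<sF>>%VS), (\dim <<sG>>%VS); rewrite dim_tensorv !dimv_rV_le !andbT.
split => //.
- apply: dimv_gt0 (F_sF _ Fx0) _; apply: contra_eqN Nx0 => /eqP ->.
  by rewrite isnorm0 // eq_sym oner_eq0.
- apply: dimv_gt0 (G_sG _ Gg0) _; apply: contra_eqN (proj2 Gg0) => /eqP ->.
  by rewrite dot0l eq_sym oner_eq0.
Qed.
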